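(* Let $n,d\ge1$, let $\sigma$ be a reflection of $\mathbb{Z}_n^d$ (with specified half-spaces $H^+,H^-$), and let $X$ be a lazy simple random walk on $\mathbb{Z}_n^d$. Then for all $t\ge1$, all $b\in\mathbb{Z}_n^d$ and all sets $D_1,\dots,D_t\subseteq\mathbb{Z}_n^d$, \[ \mathbb{P}\big(X_1\in D_1,\dots,X_t\in D_t\,\big|\,X_0\in\{b\}\big)\le\mathbb{P}\big(X_1\in D_1^\sigma,\dots,X_t\in D_t^\sigma\,\big|\,X_0\in\{b\}^\sigma\big). \]
   Context: $\mathbb{Z}_n^d$ is equipped with the graph distance of the torus (nearest-neighbour graph). A reflection of a metric space $(M,d)$ is an isometry $\sigma:M\to M$ together with a decomposition $M=H^0\sqcup H^+\sqcup H^-$ such that $\sigma^2x=x$ for all $x$, $H^0$ is the set of fixed points of $\sigma$, $\sigma H^+=H^-$, and $d(x,y)<d(x,\sigma y)$ for all $x,y\in H^+$. The two-point rearrangement of a set $A\subseteq M$ is $A^\sigma$ defined by $A^\sigma\cap H^+=(A\cup\sigma A)\cap H^+$, $A^\sigma\cap H^-=(A\cap\sigma A)\cap H^-$, $A^\sigma\cap H^0=A\cap H^0$ (note $\{b\}^\sigma$ is again a singleton). The lazy simple random walk on $\mathbb{Z}_n^d$ stays put with probability $1/2$ and otherwise moves from $x$ to $x\pm e_i$ ($i=1,\dots,d$), each with probability $1/(4d)$. *)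

From HB Require Import structures.
From mathcomp Require Import all_boot all_order all_algebra.
Set Implicit Arguments. Unset Strict Implicit. Unset Printing Implicit Defensive.
Import Order.TTheory GRing.Theory Num.Theory.

Definition torus (n d : nat) := {ffun 'I_d -> 'I_n}.

Definition tshift n d (x : torus n d) (i : 'I_d) (s : bool) : torus n d :=
  [ffun j => if j == i then (if s then ordS (x j) else ord_pred (x j)) else x j].

Definition tadj n d (x y : torus n d) : bool :=
  [exists i : 'I_d, (y == tshift x i true) || (y == tshift x i false)].

Fixpoint reach n d (k : nat) (x y : torus n d) : bool :=
  if k is k'.+1 then reach k' x y || [exists z, reach k' x z && tadj z y]
  else x == y.

(* Graph distance: the least k such that y is within k steps of x
   (the torus is connected of diameter <= d * n, so the search range
   0 .. d*n suffices). *)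
Definition tdist n d (x y : torus n d) : nat :=
  find (fun k => reach k x y) (iota 0 (d * n).+1).

Definition fixset n d (sigma : torus n d -> torus n d) : {set torus n d} :=
  [set x | sigma x == x].

Definition is_reflection n d (sigma : torus n d -> torus n d)
    (Hp Hm : {set torus n d}) : Prop :=
  [/\ (forall x y, tdist (sigma x) (sigma y) = tdist x y),
      (forall x, sigma (sigma x) = x),
      [/\ [disjoint Hp & Hm], [disjoint fixset sigma & Hp :|: Hm]
        & fixset sigma :|: Hp :|: Hm = setT],
      sigma @: Hp = Hm &
      (forall x y, x \in Hp -> y \in Hp -> tdist x y < tdist x (sigma y))%N].

Definition rearr n d (sigma : torus n d -> torus n d) (Hp Hm : {set torus n d})
    (A : {set torus n d}) : {set torus n d} :=
  (Hp :&: (A :|: sigma @: A)) :|: (Hm :&: (A :&: sigma @: A))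
    :|: (fixset sigma :&: A).

Local Open Scope ring_scope.

Definition lazy_P (R : fieldType) n d (x y : torus n d) : R :=
  (x == y)%:R / 2%:R +
  \sum_(i < d) \sum_(s : bool) (tshift x i s == y)%:R / (4 * d)%:R.

(* P(X_1 \in D_1, ..., X_t \in D_t | X_0 = x) for the Markov chain with
   kernel P, D = [:: D_1; ...; D_t]. *)
Fixpoint path_prob (R : fieldType) (T : finType) (P : T -> T -> R)
    (x : T) (D : seq {set T}) : R :=
  if D is D1 :: D' then \sum_(y in D1) P x y * path_prob P y D' else 1.

(* P(X_1 \in D_1, ..., X_t \in D_t | X_0 \in A), with X_0 uniformly
   distributed on A (only used for singletons A, where it is the
   conditional probability given X_0 = the point of A). *)
Definition cond_prob (R : fieldType) (T : finType) (P : T -> T -> R)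
    (A : {set T}) (D : seq {set T}) : R :=
  (\sum_(a in A) path_prob P a D) / #|A|%:R.

From Pilot Require Import Defs.
From HB Require Import structures.
From mathcomp Require Import all_boot all_order all_algebra.
From mathcomp Require Import ring lra.
Import Order.TTheory GRing.Theory Num.Theory.

Set Implicit Arguments.
Unset Strict Implicit.
Unset Printing Implicit Defensive.

(** The lazy walk kernel is [f (tdist x y)] for a nonnegative, nonincreasing
   profile [f], so a reflection [sigma] preserves it and, for [x, y] in [H^+],
   moving [y] to the far side can only lower it.  Write [g] for the path
   probability [x |-> P(X_1 in D_1, ..., X_t in D_t | X_0 = x)] and [G] for the
   one with the rearranged sets.  By induction on [t], [G] dominates [g] on
   every pair [{x, sigma x}] with [x] in [H^+]: [G x] bounds both [g x] and
   [g (sigma x)], and the pair sums compare.  Both steps of the recursion, the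
   restriction to [D] resp. [D^sigma] and the application of the kernel,
   preserve this domination; the theorem is its instance at the starting
   point. *)

Lemma iter_ordS_eq n k (i : 'I_n) : (iter k (@ordS n) i == i) = (n %| k)%N.
Proof.
have iterE : nat_of_ord (iter k (@ordS n) i) = (i + k) %% n.
  elim: k => [|k IH] /=; first by rewrite addn0 modn_small.
  by rewrite IH -addn1 modnDml addn1 addnS.
rewrite -val_eqE /= iterE -{2}(modn_small (ltn_ord i)) -{2}[nat_of_ord i]addn0.
by rewrite eqn_modDl mod0n.
Qed.

Lemma ordS_eq n (i : 'I_n) : (ordS i == i) = (n == 1)%N.
Proof. by rewrite -dvdn1 -(iter_ordS_eq 1 i). Qed.

Lemma ord_pred_eq n (i : 'I_n) : (ord_pred i == i) = (n == 1)%N.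
Proof. by rewrite -(inj_eq (@ordS_inj n)) ord_predK eq_sym ordS_eq. Qed.

Lemma ordS_eq_ord_pred n (i : 'I_n) : (ordS i == ord_pred i) = (n %| 2)%N.
Proof. by rewrite -(inj_eq (@ordS_inj n)) ord_predK -(iter_ordS_eq 2 i). Qed.

Local Open Scope ring_scope.

Section LazyWalkKernel.
Variables (n d : nat).
Hypotheses (n_gt0 : (0 < n)%N) (d_gt0 : (0 < d)%N).
Local Notation T := (torus n d).

Lemma tshift_eq_self (x : T) i s : (tshift x i s == x) = (n == 1)%N.
Proof.
apply/eqP/idP => [/(congr1 (fun y : T => y i))|n1].
  by rewrite ffunE eqxx; case: s => /eqP; rewrite (ordS_eq, ord_pred_eq).
apply/ffunP => j; rewrite ffunE; case: eqP => // ->.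
by case: s; apply/eqP; rewrite (ordS_eq, ord_pred_eq).
Qed.

Lemma eq_tshift (x : T) i j s s' : (n != 1)%N ->
  (tshift x i s == tshift x j s') = (i == j) && ((s == s') || (n %| 2)%N).
Proof.
move=> n_neq1; apply/eqP/idP => [e | /andP[/eqP <- /orP[/eqP <- // | n2]]].
  have := congr1 (fun y : T => y i) e; rewrite !ffunE eqxx eq_sym; clear e.
  case: eqP => [<- | _] /eqP.
    by case: s; case: s' => //=; rewrite ?ordS_eq_ord_pred // eq_sym ordS_eq_ord_pred.
  by case: s; rewrite (ordS_eq, ord_pred_eq) (negPf n_neq1).
apply/ffunP => k; rewrite !ffunE; case: eqP => // _.
by case: s; case: s' => //; apply/eqP; rewrite ?ordS_eq_ord_pred // eq_sym ordS_eq_ord_pred.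
Qed.

Lemma tdist_cases (x y : T) : exists k,
  tdist x y = if x == y then 0%N else if tadj x y then 1%N else k.+2.
Proof.
have dn_gt0 : (0 < d * n)%N by rewrite muln_gt0 d_gt0.
rewrite /tdist -(prednK dn_gt0) /=.
have -> : [exists z, (x == z) && tadj z y] = tadj x y.
  by apply/existsP/idP => [[z /andP[/eqP <-]] | adj] //; exists x; rewrite eqxx.
by case: (x == y); [exists 0%N | case: (tadj x y); [exists 0%N | eexists]].
Qed.

Variable R : realFieldType.

Definition lazy_stay : R :=
  1 / 2%:R + \sum_(i < d) \sum_(s : bool) (n == 1)%:R / (4 * d)%:R.
Definition lazy_move : R := (1 + (n %| 2)%:R) / (4 * d)%:R.
Definition lazy_profile (k : nat) : R :=
  if k == 0%N then lazy_stay else if k == 1%N then lazy_move else 0.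

Lemma lazy_P_self (x : T) : lazy_P R x x = lazy_stay.
Proof.
rewrite /lazy_P eqxx; congr (_ + _).
by apply: eq_bigr => i _; apply: eq_bigr => s _; rewrite tshift_eq_self.
Qed.

Lemma lazy_P_neq (x y : T) :
  x != y -> lazy_P R x y = if tadj x y then lazy_move else 0.
Proof.
move=> /negPf xy; rewrite /lazy_P xy mul0r add0r.
case: ifPn => [/existsP[i0 /orP adj] | nadj]; last first.
  apply: big1 => i _; apply: big1 => s _; case: eqP => [yE | _]; last by rewrite mul0r.
  by case/existsP: nadj; exists i; case: s yE => <-; rewrite eqxx ?orbT.
have [s0 yE] : exists s0, y = tshift x i0 s0.
  by case: adj => /eqP ->; [exists true | exists false].
have n_neq1 : (n != 1)%N by rewrite -(tshift_eq_self x i0 s0) -yE eq_sym xy.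
rewrite (bigD1 i0) //= [X in _ + X]big1 ?addr0 => [|i i_neq]; last first.
  by apply: big1 => s _; rewrite yE eq_tshift // (negPf i_neq) mul0r.
rewrite big_bool /= yE !eq_tshift // eqxx /lazy_move -mulrDl; clear yE adj.
by case: s0 => /=; rewrite ?orbT ?add0r ?addr0 // addrC.
Qed.

Lemma lazy_P_dist (x y : T) : lazy_P R x y = lazy_profile (tdist x y).
Proof.
case: (tdist_cases x y) => k ->; rewrite /lazy_profile.
case: (eqVneq x y) => [<- | xy]; first by rewrite lazy_P_self.
by rewrite lazy_P_neq //; case: (tadj x y).
Qed.

Lemma lazy_move_ge0 : 0 <= lazy_move.
Proof. by rewrite /lazy_move divr_ge0 ?addr_ge0 ?ler0n. Qed.

Lemma lazy_move_le_stay : lazy_move <= lazy_stay.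
Proof.
have d4 : (4 : R) <= (4 * d)%:R by rewrite ler_nat leq_pmulr.
have n2 : (n %| 2)%:R <= 1 :> R by case: (n %| 2)%N; rewrite ?ler01.
apply: (@le_trans _ _ (1 / 2%:R)).
  rewrite /lazy_move ler_pdivrMr; last by lra.
  have := ler0n R (n %| 2)%N; lra.
rewrite /lazy_stay lerDl; apply: sumr_ge0 => i _; apply: sumr_ge0 => s _.
by rewrite divr_ge0 ?ler0n.
Qed.

Lemma lazy_profile_ge0 k : 0 <= lazy_profile k.
Proof.
have := lazy_move_ge0; have := lazy_move_le_stay.
by rewrite /lazy_profile; case: ifP => _; [lra | case: ifP].
Qed.

Lemma lazy_profile_antitone j k : (j < k)%N -> lazy_profile k <= lazy_profile j.
Proof.
have := lazy_move_ge0; have := lazy_move_le_stay.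
by rewrite /lazy_profile; case: j => [|[|j]]; case: k => [|[|k]] //= *; lra.
Qed.

End LazyWalkKernel.

Lemma ler_pair_comb (R : numDomainType) (p q a b A B : R) : 0 <= q <= p ->
  a <= A -> b <= A -> a + b <= A + B -> p * a + q * b <= p * A + q * B.
Proof.
move=> /andP[q_ge0 q_le_p] le_a le_b le_sum.
have -> : p * A + q * B = p * a + q * b + (q * (A + B - (a + b)) + (p - q) * (A - a)).
  by ring.
by rewrite lerDl addr_ge0 // mulr_ge0 // subr_ge0.
Qed.

Section TwoPointRearrangement.
Variables (n d : nat) (R : realFieldType).
Local Notation T := (torus n d).
Variables (s : T -> T) (Hp Hm : {set T}).
Hypothesis sK : involutive s.
Hypothesis s_Hp : s @: Hp = Hm.
Hypothesis Hp_Hm_disjoint : [disjoint Hp & Hm].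
(* [Defs.] is needed because finset's least-fixpoint [fixset] shadows it. *)
Hypothesis fixset_disjoint : [disjoint Defs.fixset s & Hp :|: Hm].
Hypothesis fixset_Hp_Hm_cover : Defs.fixset s :|: Hp :|: Hm = setT.

Lemma mem_Hm x : (x \in Hm) = (s x \in Hp).
Proof. by rewrite -s_Hp (can_imset_pre _ sK) inE. Qed.

Variant side_spec (x : T) : bool -> bool -> Type :=
  | SideFix of s x = x : side_spec x false false
  | SidePos of s x != x : side_spec x true false
  | SideNeg of s x != x : side_spec x false true.

Lemma sideP x : side_spec x (x \in Hp) (s x \in Hp).
Proof.
have [fix_x | nfix_x] := eqVneq (s x) x.
  have : (x \in Hp :|: Hm) = false.
    by rewrite (disjointFr fixset_disjoint) // inE fix_x.
  rewrite inE mem_Hm fix_x orbb => ->; exact: SideFix.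
have := in_setT x; rewrite -fixset_Hp_Hm_cover !inE (negPf nfix_x) /= mem_Hm.
have := disjointFr Hp_Hm_disjoint; rewrite /= => Hp_nHm.
case: (boolP (x \in Hp)) => [xHp | _] /=; last by move=> ->; constructor.
by rewrite -mem_Hm Hp_nHm //; constructor.
Qed.

Lemma fixed_notin_Hp x : s x = x -> x \notin Hp.
Proof. by move=> fix_x; case: sideP => // /eqP[]. Qed.

Lemma mem_rearr A x : x \in rearr s Hp Hm A =
  if x \in Hp then (x \in A) || (s x \in A)
  else if s x \in Hp then (x \in A) && (s x \in A) else x \in A.
Proof.
rewrite /rearr !inE (can_imset_pre _ sK) !inE mem_Hm.
by case: sideP => [-> | /negPf-> | /negPf->]; rewrite ?eqxx //= !orbF.
Qed.

Lemma sum_pairs (F : T -> R) :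
  \sum_y F y = \sum_(y in Defs.fixset s) F y + \sum_(y in Hp) (F y + F (s y)).
Proof.
rewrite (bigID (mem (Defs.fixset s))) big_split /=; congr (_ + _).
rewrite (bigID (mem Hp)) /=; congr (_ + _).
  by apply: eq_bigl => y; rewrite inE; case: sideP => [-> | /negPf-> | _]; rewrite ?eqxx ?andbF.
rewrite [LHS](reindex_inj (can_inj sK)); apply: eq_bigl => y; rewrite /= inE sK.
by case: sideP => [-> | nfix_y | _]; rewrite ?eqxx //= ?andbF // andbT eq_sym.
Qed.

Lemma ler_pair_sum (F G : T -> R) :
  (forall y, s y = y -> F y <= G y) ->
  (forall y, y \in Hp -> F y + F (s y) <= G y + G (s y)) ->
  \sum_y F y <= \sum_y G y.
Proof.
move=> le_fix le_pair; rewrite !sum_pairs lerD //.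
  by apply: ler_sum => y; rewrite inE => /eqP; apply: le_fix.
exact: ler_sum.
Qed.

Definition dominated (g G : T -> R) :=
  [/\ forall x, 0 <= g x,
      forall x, s x = x -> g x <= G x &
      forall x, x \in Hp ->
        [/\ g x <= G x, g (s x) <= G x & g x + g (s x) <= G x + G (s x)]].

Lemma eq_dominated g1 g2 G1 G2 :
  g1 =1 g2 -> G1 =1 G2 -> dominated g1 G1 -> dominated g2 G2.
Proof.
move=> eq_g eq_G [g_ge0 le_fix le_pair]; split=> x.
- by rewrite -eq_g.
- by rewrite -eq_g -eq_G; apply: le_fix.
- by rewrite -!eq_g -!eq_G; apply: le_pair.
Qed.

Lemma dominated_indicator (A : {set T}) g G : dominated g G ->
  dominated (fun y => (y \in A)%:R * g y)
            (fun y => (y \in rearr s Hp Hm A)%:R * G y).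
Proof.
move=> [g_ge0 le_fix le_pair]; split=> x.
- by rewrite mulr_ge0 ?ler0n.
- move=> fix_x; have x_nHp := fixed_notin_Hp fix_x.
  by rewrite mem_rearr fix_x (negPf x_nHp) ler_wpM2l ?ler0n ?le_fix.
move=> xHp; have [le_x le_sx le_sum] := le_pair x xHp.
have := g_ge0 x; have := g_ge0 (s x).
have sx_nHp : (s x \in Hp) = false by case: sideP xHp.
rewrite !mem_rearr sK xHp sx_nHp.
by case: (x \in A); case: (s x \in A); rewrite /= ?mul1r ?mul0r; split; lra.
Qed.

Variable P : T -> T -> R.
Hypothesis P_ge0 : forall x y, 0 <= P x y.
Hypothesis P_reflect : forall x y, P (s x) (s y) = P x y.
Hypothesis P_Hp : forall x y, x \in Hp -> y \in Hp -> P x (s y) <= P x y.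

Lemma dominated_kernel h H : dominated h H ->
  dominated (fun x => \sum_y P x y * h y) (fun x => \sum_y P x y * H y).
Proof.
move=> [h_ge0 le_fix le_pair].
have P_sx x y : P (s x) y = P x (s y) by rewrite -P_reflect sK.
have le_fix' x y : s y = y -> P x y * h y <= P x y * H y.
  by move=> fix_y; rewrite ler_wpM2l ?le_fix.
split=> [x | x fix_x | x xHp].
- by rewrite sumr_ge0 // => y _; rewrite mulr_ge0.
- apply: ler_pair_sum => [y /le_fix' // | y yHp].
  have [_ _ le_sum] := le_pair y yHp.
  by rewrite -{2 4}fix_x P_sx sK -!mulrDr ler_wpM2l.
have P_xsy y : y \in Hp -> 0 <= P x (s y) <= P x y.
  by move=> yHp; rewrite P_ge0 P_Hp.
split.
- apply: ler_pair_sum => [y /le_fix' // | y yHp].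
  have [le_y le_sy le_sum] := le_pair y yHp.
  exact: ler_pair_comb (P_xsy y yHp) le_y le_sy le_sum.
- apply: ler_pair_sum => [y fix_y | y yHp]; first by rewrite P_sx fix_y le_fix'.
  have [le_y le_sy le_sum] := le_pair y yHp.
  rewrite P_reflect P_sx addrC.
  by apply: ler_pair_comb (P_xsy y yHp) le_sy le_y _; rewrite addrC.
- rewrite -!big_split /=; apply: ler_pair_sum => [y fix_y | y yHp].
    by rewrite P_sx fix_y lerD ?le_fix'.
  have [_ _ le_sum] := le_pair y yHp.
  rewrite !P_sx sK -!mulrDl [P x (s y) + _]addrC -!mulrDr.
  by rewrite ler_wpM2l ?addr_ge0.
Qed.

Lemma path_prob_cons x (A : {set T}) Ds :
  path_prob P x (A :: Ds) = \sum_y P x y * ((y \in A)%:R * path_prob P y Ds).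
Proof.
rewrite /= big_mkcond; apply: eq_bigr => y _.
by case: (y \in A); rewrite ?mul1r ?mul0r ?mulr0.
Qed.

Lemma dominated_path_prob Ds :
  dominated (fun x => path_prob P x Ds)
            (fun x => path_prob P x [seq rearr s Hp Hm A | A <- Ds]).
Proof.
elim: Ds => [|A Ds IH].
  by split=> [x | x _ | x _] /=; rewrite ?ler01 ?lexx.
apply: eq_dominated (dominated_kernel (dominated_indicator A IH)) => x;
  by rewrite path_prob_cons.
Qed.

Lemma rearr_set1 b :
  rearr s Hp Hm [set b] = [set if s b \in Hp then s b else b].
Proof.
apply/setP => x; rewrite mem_rearr !inE (inv_eq sK).
have [-> | x_b] := eqVneq x b; first by case: (sideP b); rewrite ?eqxx.
case: (eqVneq x (s b)) x_b => [-> sb_b | x_sb x_b].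
  by rewrite sK; case: ifP => _; rewrite ?eqxx ?(negPf sb_b) //; case: ifP.
by rewrite /= !if_same; case: ifP => _; rewrite ?(negPf x_b) ?(negPf x_sb).
Qed.

Lemma dominated_le_rearr g G b : dominated g G ->
  g b <= G (if s b \in Hp then s b else b).
Proof.
move=> [_ le_fix le_pair].
case: (sideP b) (le_pair b) (le_pair (s b)) => [fix_b _ _ | _ [] // | _ _ []] //.
  exact: le_fix.
by rewrite sK.
Qed.

Lemma cond_prob_set1_le_rearr b Ds :
  cond_prob P [set b] Ds
  <= cond_prob P (rearr s Hp Hm [set b]) [seq rearr s Hp Hm A | A <- Ds].
Proof.
rewrite rearr_set1 /cond_prob !big_set1 !cards1 !divr1.
exact: dominated_le_rearr (dominated_path_prob Ds).
Qed.

End TwoPointRearrangement.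

Theorem lemma3p2 (R : realFieldType) (n d : nat) (hn : (1 <= n)%N) (hd : (1 <= d)%N)
    (sigma : torus n d -> torus n d) (Hp Hm : {set torus n d})
    (hsigma : is_reflection sigma Hp Hm)
    (t : nat) (ht : (1 <= t)%N) (b : torus n d) (D : t.-tuple {set torus n d}) :
  cond_prob (@lazy_P R n d) [set b] D
  <= cond_prob (@lazy_P R n d) (rearr sigma Hp Hm [set b])
       [seq rearr sigma Hp Hm Di | Di <- D].
Proof.
have [sigma_iso sigmaK [Hp_Hm fix_HpHm cover] sigma_Hp closer] := hsigma.
apply: cond_prob_set1_le_rearr => // [x y | x y | x y xHp yHp].
- by rewrite lazy_P_dist // lazy_profile_ge0.
- by rewrite !lazy_P_dist // sigma_iso.
- by rewrite !lazy_P_dist // lazy_profile_antitone // closer.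
Qed.
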